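(* Let $n\ge1$, $T>0$, $\alpha\ge0$, $l>0$, $\Lambda\in\mathbb{R}^{n\times n}$ symmetric positive definite, $\Sigma$ symmetric nonnegative definite, $\theta_1,\dots,\theta_n\ge0$, and $f(\xi,x)=\xi^\top\Lambda\xi+\alpha x^\top\Sigma x$. Assume that the initial value problem $$C'=C^\top\Lambda^{-1}C+C^\top\tilde CC-\alpha\Sigma,\qquad C(T)=lI,\qquad \tilde C(l,t):=\operatorname{diag}\Big(\frac{\theta_i}{c_{i,i}(l,t)}\Big),$$ possesses a positive definite solution $C(l,t)=(c_{i,j}(l,t))_{i,j=1,\dots,n}$ on $[0,T]$. Then $w(l,t,x):=x^\top C(l,t)x$ satisfies $$\frac{\partial w}{\partial t}(t,x)=\sup_{(\xi,\eta)\in\mathbb{R}^n\times\mathbb{R}^n}\Big[\sum_{i=1}^n\theta_i\big(w(t,x)-w(t,x-\eta_i e_i)\big)+\nabla_x w(t,x)\,\xi-f(\xi,x)\Big],\qquad w(T,x)=l\,x^\top x,$$ with maximizer $u^*=(\xi^*,\eta^* )$ given by $$\xi^*(l,t,x)=\Lambda^{-1}C(l,t)x,\qquad \eta^*(l,t,x)=\bar C(l,t)C(l,t)x,\qquad \bar C(l,t):=\operatorname{diag}\Big(\frac{1}{c_{i,i}(l,t)}\Big).$$ If there exist $i_1,\dots,i_k\in\{1,\dots,n\}$ with $\theta_{i_j}=0$ ($j=1,\dots,k$), then $\eta_{i_j}$ can be chosen arbitrarily; up to arbitrary choices of these $\eta_{i_j}$, the maximizer is unique.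
   Context: $e_i$ denotes the $i$-th standard unit vector of $\mathbb{R}^n$, $\nabla_x w$ is the gradient (row vector) in $x$, and $w(t,x)$ abbreviates $w(l,t,x)$. *)

From HB Require Import structures.
From mathcomp Require Import all_boot all_order all_algebra.
From mathcomp Require Import all_classical all_reals all_analysis.
Set Implicit Arguments. Unset Strict Implicit. Unset Printing Implicit Defensive.
Import Order.TTheory GRing.Theory Num.Theory.
Import numFieldNormedType.Exports.
Local Open Scope classical_set_scope.
Local Open Scope ring_scope.

Definition qform (R : realType) (n : nat) (A : 'M[R]_n) (x : 'cV[R]_n) : R :=
  (x^T *m A *m x) 0 0.

Definition symmetric_mx (R : realType) (n : nat) (A : 'M[R]_n) : Prop := A^T = A.

Definition posdef_mx (R : realType) (n : nat) (A : 'M[R]_n) : Prop :=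
  symmetric_mx A /\ forall x : 'cV[R]_n, x != 0 -> 0 < qform A x.

Definition nonnegdef_mx (R : realType) (n : nat) (A : 'M[R]_n) : Prop :=
  symmetric_mx A /\ forall x : 'cV[R]_n, 0 <= qform A x.

Definition unitv (R : realType) (n : nat) (i : 'I_n) : 'cV[R]_n := delta_mx i 0.

(* derivative of g at t relative to the interval [a,b] (one-sided at the
   endpoints): g has derivative d at t within [a,b] *)
Definition deriv_in (R : realType) (a b : R) (g : R -> R) (t d : R) : Prop :=
  forall e : R, 0 < e -> exists2 del : R, 0 < del &
    forall h : R, h != 0 -> `|h| < del -> a <= t + h <= b ->
      `| (g (t + h) - g t) / h - d | < e.

Definition grad_apply (R : realType) (n : nat) (v : 'cV[R]_n -> R)
    (x xi : 'cV[R]_n) : R :=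
  \sum_(i < n) (derive1 (fun s : R => v (x + s *: unitv R i)) 0) * xi i 0.

From HB Require Import structures.
From mathcomp Require Import all_boot all_order all_algebra.
From mathcomp Require Import all_classical all_reals all_analysis.
From mathcomp Require Import ring lra.
Import Order.TTheory GRing.Theory Num.Theory.
Import numFieldNormedType.Exports.
Local Open Scope classical_set_scope.
Local Open Scope ring_scope.

(* Since w(t, .) is the quadratic form of C(t), the bracket in the HJB
   equation is a concave quadratic function of (xi, eta) that splits into one
   piece for xi and one piece for each eta_i.  Completing the square gives
     H(xi_opt, eta_opt) - H(xi, eta)
       = (xi - xi_opt)^T Lambda (xi - xi_opt)
         + sum_i theta_i c_ii (eta_i - eta_opt_i)^2,
   which yields maximality of (xi_opt, eta_opt) and uniqueness up to the eta_i
   with theta_i = 0.  The maximal value is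
   x^T (C^T Lambda^-1 C + C^T C~ C - alpha Sigma) x, i.e. x^T C'(t) x by the
   Riccati equation, and that is the time derivative of w(t, x). *)

Section DerivIn.
Variables (R : realType) (a b : R).

Lemma deriv_inD (f g : R -> R) t df dg :
  deriv_in a b f t df -> deriv_in a b g t dg ->
  deriv_in a b (fun s => f s + g s) t (df + dg).
Proof.
move=> Hf Hg e e0.
have e2 : 0 < e / 2 by rewrite divr_gt0.
case: (Hf _ e2) => d1 d10 H1; case: (Hg _ e2) => d2 d20 H2.
exists (Num.min d1 d2); first by rewrite lt_min d10 d20.
move=> h h0; rewrite lt_min => /andP[hd1 hd2] hab.
have := H1 h h0 hd1 hab; have := H2 h h0 hd2 hab.
have -> : (f (t + h) + g (t + h) - (f t + g t)) / h - (df + dg)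
  = ((f (t + h) - f t) / h - df) + ((g (t + h) - g t) / h - dg) by ring.
move=> A B; apply: (le_lt_trans (ler_normD _ _)).
by rewrite (splitr e) ltrD.
Qed.

Lemma deriv_inMl (f : R -> R) k t d :
  deriv_in a b f t d -> deriv_in a b (fun s => k * f s) t (k * d).
Proof.
move=> Hf e e0.
have k1 : 0 < `|k| + 1 by rewrite ltr_wpDl.
case: (Hf (e / (`|k| + 1))) => [|del del0 H]; first by rewrite divr_gt0.
exists del => // h h0 hd hab.
have := H h h0 hd hab; rewrite ltr_pdivlMr //.
have -> : (k * f (t + h) - k * f t) / h - k * d
  = k * ((f (t + h) - f t) / h - d) by ring.
rewrite normrM => A.
have := normr_ge0 k; have := normr_ge0 ((f (t + h) - f t) / h - d).
nra.
Qed.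

Lemma deriv_in_sum (I : Type) (r : seq I) (g : I -> R -> R) (d : I -> R) t :
  (forall i, deriv_in a b (g i) t (d i)) ->
  deriv_in a b (fun s => \sum_(i <- r) g i s) t (\sum_(i <- r) d i).
Proof.
move=> Hg; elim: r => [|i r IH].
  move=> e e0; exists 1 => // h _ _ _.
  by rewrite !big_nil subrr mul0r subrr normr0.
under eq_fun do rewrite big_cons.
by rewrite big_cons; exact: deriv_inD (Hg i) IH.
Qed.

End DerivIn.

Lemma sup_range_max (R : realType) (T : Type) (g : T -> R) (u0 : T) :
  (forall u, g u <= g u0) -> sup (range g) = g u0.
Proof.
move=> gmax; apply/eqP; rewrite eq_le; apply/andP; split.
  by apply: ge_sup; [exists (g u0), u0 | move=> y [u _ <-]].
by apply: ub_le_sup; [exists (g u0) => y [u _ <-] | exists u0].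
Qed.

Section Bilinear.
Context {R : realType} {n : nat}.
Implicit Types (A B : 'M[R]_n) (u v x : 'cV[R]_n).

Definition bil u A v : R := (u^T *m A *m v) 0 0.

Lemma qformE A u : qform A u = bil u A u. Proof. by []. Qed.

Lemma bilDl u u' A v : bil (u + u') A v = bil u A v + bil u' A v.
Proof. by rewrite /bil linearD /= !mulmxDl mxE. Qed.
Lemma bilDr u A v v' : bil u A (v + v') = bil u A v + bil u A v'.
Proof. by rewrite /bil mulmxDr mxE. Qed.
Lemma bilZl k u A v : bil (k *: u) A v = k * bil u A v.
Proof. by rewrite /bil linearZ /= -!scalemxAl mxE. Qed.
Lemma bilZr k u A v : bil u A (k *: v) = k * bil u A v.
Proof. by rewrite /bil -!scalemxAr mxE. Qed.
Lemma bilNl u A v : bil (- u) A v = - bil u A v.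
Proof. by rewrite -scaleN1r bilZl mulN1r. Qed.
Lemma bilAD u A B v : bil u (A + B) v = bil u A v + bil u B v.
Proof. by rewrite /bil mulmxDr mulmxDl mxE. Qed.
Lemma bilAZ k u A v : bil u (k *: A) v = k * bil u A v.
Proof. by rewrite /bil -scalemxAr -scalemxAl mxE. Qed.
Lemma bilAB u A B v : bil u (A - B) v = bil u A v - bil u B v.
Proof. by rewrite -scaleN1r bilAD bilAZ mulN1r. Qed.

Lemma bil_sym u A v : A^T = A -> bil u A v = bil v A u.
Proof.
move=> hA; have e (M : 'M[R]_1) : M 0 0 = M^T 0 0 by rewrite mxE.
by rewrite /bil e !trmx_mul hA trmxK mulmxA.
Qed.

Lemma bil_mull B u A v : bil (B *m u) A v = bil u (B^T *m A) v.
Proof. by rewrite /bil trmx_mul !mulmxA. Qed.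
Lemma bil_mulr B u A v : bil u A (B *m v) = bil u (A *m B) v.
Proof. by rewrite /bil !mulmxA. Qed.

Lemma bil_sum u A v : bil u A v = \sum_i u i 0 * (A *m v) i 0.
Proof. by rewrite /bil -mulmxA mxE; apply: eq_bigr => i _; rewrite mxE. Qed.

Lemma bil_unitvl u A i : bil (unitv R i) A u = (A *m u) i 0.
Proof.
rewrite bil_sum (bigD1 i) //= big1 ?addr0; first by rewrite mxE eqxx mul1r.
by move=> j /negbTE ji; rewrite mxE ji mul0r.
Qed.

Lemma bil_unitv A i j : bil (unitv R i) A (unitv R j) = A i j.
Proof. by rewrite bil_unitvl /unitv -colE mxE. Qed.

Lemma bil_diag u d v : bil u (diag_mx d) v = \sum_i u i 0 * d 0 i * v i 0.
Proof. by rewrite bil_sum; apply: eq_bigr => i _; rewrite mul_diag_mx mxE mulrA. Qed.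

Lemma qform_entries A x : qform A x = \sum_i \sum_j (x i 0 * x j 0) * A i j.
Proof.
rewrite qformE bil_sum; apply: eq_bigr => i _.
by rewrite mxE mulr_sumr; apply: eq_bigr => j _; ring.
Qed.

Lemma qform_scalar k x : qform k%:M x = k * (x^T *m x) 0 0.
Proof. by rewrite /qform mul_mx_scalar -scalemxAl mxE. Qed.

Lemma qform0 A : qform A 0 = 0.
Proof. by rewrite /qform mulmx0 mxE. Qed.

Lemma qformD A u v : A^T = A ->
  qform A (u + v) = qform A u + 2 * bil v A u + qform A v.
Proof. by move=> hA; rewrite !qformE bilDl !bilDr (bil_sym u A v hA); ring. Qed.

Lemma qformB A u v : A^T = A ->
  qform A (u - v) = qform A u - 2 * bil v A u + qform A v.
Proof. by move=> hA; rewrite qformD // !qformE !bilNl -(scaleN1r v) bilZr; ring. Qed.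

Lemma qform_unitv_line A x i s : A^T = A ->
  qform A (x + s *: unitv R i) = qform A x + s * (2 * (A *m x) i 0) + s ^+ 2 * A i i.
Proof. by move=> hA; rewrite qformD // !qformE !bilZl bilZr bil_unitv bil_unitvl; ring. Qed.

Lemma grad_apply_qform A x xi : A^T = A ->
  grad_apply (qform A) x xi = 2 * bil xi A x.
Proof.
move=> hA; rewrite bil_sum mulr_sumr; apply: eq_bigr => i _.
under eq_fun do rewrite qform_unitv_line //.
rewrite derive1E derive_val.
rewrite !(scaler0, scale0r, add0r, addr0, mul1r).
by rewrite [X in X * _]/= -[X in X * _]/(_ * 1) mulr1; ring.
Qed.

Lemma unitv_neq0 (i : 'I_n) : unitv R i != 0.
Proof.
apply/eqP => h; have := congr1 (fun M : 'cV[R]_n => M i 0) h.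
by rewrite !mxE !eqxx /= => /eqP; rewrite oner_eq0.
Qed.

Lemma posdef_diag_gt0 A i : posdef_mx A -> 0 < A i i.
Proof. by case=> _ h; rewrite -bil_unitv; apply/h/unitv_neq0. Qed.

Lemma posdef_qform_ge0 A x : posdef_mx A -> 0 <= qform A x.
Proof. by case=> _ h; case: (eqVneq x 0) => [->|/h/ltW //]; rewrite qform0. Qed.

Lemma posdef_unitmx A : posdef_mx A -> A \in unitmx.
Proof.
case=> _ h; rewrite unitmxE unitfE; apply/negP => /det0P [v v0 hv].
have /h : v^T != 0 by rewrite trmx_eq0.
by rewrite qformE /bil trmxK hv mul0mx mxE ltxx.
Qed.

Lemma deriv_in_qform (a b : R) (C : R -> 'M[R]_n) (D : 'M[R]_n) x t :
  (forall i j, deriv_in a b (fun s => C s i j) t (D i j)) ->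
  deriv_in a b (fun s => qform (C s) x) t (qform D x).
Proof.
move=> dC; rewrite qform_entries.
have -> : (fun s => qform (C s) x) = fun s => \sum_i \sum_j (x i 0 * x j 0) * C s i j.
  by apply/funext => s; rewrite qform_entries.
by apply: deriv_in_sum => i; apply: deriv_in_sum => j; apply/deriv_inMl/dC.
Qed.

End Bilinear.

Section Hamiltonian.
Context {R : realType} {n : nat}.
Variables (c L : 'M[R]_n) (theta : 'I_n -> R) (x : 'cV[R]_n).
Hypotheses (c_sym : c^T = c) (L_sym : L^T = L) (L_unit : L \in unitmx)
  (c_diag_neq0 : forall i, c i i != 0).

(* The bracket of the HJB equation for w = qform c, without the term
   -alpha x^T Sigma x, which does not depend on the control. *)
Definition hamiltonian (xi eta : 'cV[R]_n) : R :=
  \sum_i theta i * (qform c x - qform c (x - eta i 0 *: unitv R i))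
  + 2 * bil xi c x - qform L xi.

Definition xi_opt := invmx L *m c *m x.
Definition eta_opt := diag_mx (\row_k (c k k)^-1) *m c *m x.

Lemma eta_opt_entry i : eta_opt i 0 = (c i i)^-1 * (c *m x) i 0.
Proof. by rewrite /eta_opt -mulmxA mul_diag_mx !mxE. Qed.

Lemma bil_xi_opt v : bil xi_opt L v = bil v c x.
Proof. by rewrite /xi_opt -mulmxA !bil_mull trmx_inv L_sym mulVmx // mulmx1 c_sym bil_sym. Qed.

Lemma jump_sum (eta : 'cV[R]_n) :
  \sum_i theta i * (qform c x - qform c (x - eta i 0 *: unitv R i))
  = \sum_i theta i * (2 * eta i 0 * (c *m x) i 0 - eta i 0 ^+ 2 * c i i).
Proof.
apply: eq_bigr => i _.
by rewrite qformB // !qformE !bilZl bilZr bil_unitv bil_unitvl; ring.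
Qed.

Lemma hamiltonian_gap xi eta :
  hamiltonian xi_opt eta_opt - hamiltonian xi eta
  = qform L (xi - xi_opt) + \sum_i theta i * c i i * (eta i 0 - eta_opt i 0) ^+ 2.
Proof.
rewrite /hamiltonian !jump_sum qformB // bil_xi_opt (qformE L xi_opt) bil_xi_opt.
have -> : \sum_i theta i * (2 * eta_opt i 0 * (c *m x) i 0 - eta_opt i 0 ^+ 2 * c i i)
  = \sum_i theta i * (2 * eta i 0 * (c *m x) i 0 - eta i 0 ^+ 2 * c i i)
    + \sum_i theta i * c i i * (eta i 0 - eta_opt i 0) ^+ 2.
  by rewrite -big_split; apply: eq_bigr => i _ /=; rewrite eta_opt_entry; field.
ring.
Qed.

Lemma hamiltonian_opt :
  hamiltonian xi_opt eta_opt
  = qform (c^T *m invmx L *m c + c^T *m diag_mx (\row_k (theta k / c k k)) *m c) x.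
Proof.
rewrite qformE bilAD.
have -> : bil x (c^T *m diag_mx (\row_k (theta k / c k k)) *m c) x
    = bil (c *m x) (diag_mx (\row_k (theta k / c k k))) (c *m x).
  by rewrite bil_mulr bil_mull mulmxA.
have -> : bil x (c^T *m invmx L *m c) x = bil xi_opt c x.
  by rewrite /xi_opt -[invmx L *m c *m x]mulmxA !bil_mull trmx_inv L_sym mulmxA.
rewrite bil_diag /hamiltonian jump_sum (qformE L xi_opt) bil_xi_opt.
have -> : \sum_i theta i * (2 * eta_opt i 0 * (c *m x) i 0 - eta_opt i 0 ^+ 2 * c i i)
   = \sum_i (c *m x) i 0 * (\row_k (theta k / c k k)) 0 i * (c *m x) i 0.
  by apply: eq_bigr => i _; rewrite eta_opt_entry mxE; field.
ring.
Qed.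

End Hamiltonian.

Section HamiltonianMax.
Context {R : realType} {n : nat}.
Variables (c L : 'M[R]_n) (theta : 'I_n -> R) (x : 'cV[R]_n).
Hypotheses (c_posdef : posdef_mx c) (L_posdef : posdef_mx L)
  (theta_ge0 : forall i, 0 <= theta i).

Let c_sym : c^T = c. Proof. by case: c_posdef. Qed.
Let L_sym : L^T = L. Proof. by case: L_posdef. Qed.
Let L_unit : L \in unitmx. Proof. exact: posdef_unitmx. Qed.
Let c_diag_neq0 i : c i i != 0. Proof. by rewrite gt_eqF ?posdef_diag_gt0. Qed.

Let jump_gap_ge0 (eta : 'cV[R]_n) i :
  0 <= theta i * c i i * (eta i 0 - eta_opt c x i 0) ^+ 2.
Proof. by rewrite mulr_ge0 ?sqr_ge0 // mulr_ge0 // ltW // posdef_diag_gt0. Qed.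

Lemma hamiltonian_le_opt xi eta :
  hamiltonian c L theta x xi eta
  <= hamiltonian c L theta x (xi_opt c L x) (eta_opt c x).
Proof.
rewrite -subr_ge0 hamiltonian_gap // addr_ge0 ?posdef_qform_ge0 //.
by apply: sumr_ge0 => i _.
Qed.

Lemma hamiltonian_eq_opt xi eta :
  hamiltonian c L theta x xi eta
    = hamiltonian c L theta x (xi_opt c L x) (eta_opt c x)
  <-> xi = xi_opt c L x /\ forall i, theta i != 0 -> eta i 0 = eta_opt c x i 0.
Proof.
transitivity (qform L (xi - xi_opt c L x)
  + \sum_i theta i * c i i * (eta i 0 - eta_opt c x i 0) ^+ 2 == 0).
  by rewrite -hamiltonian_gap // subr_eq0 eq_sym; exact: rwP eqP.
rewrite paddr_eq0 ?posdef_qform_ge0 //; last by apply: sumr_ge0 => i _.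
have [_ L_def] := L_posdef.
split=> [/andP[/eqP qL0 /eqP /psumr_eq0P jump0] | [-> eta_eq]].
  split=> [|i /negbTE theta_neq0].
    apply/eqP; rewrite -subr_eq0; apply/negPn/negP => /L_def.
    by rewrite qL0 ltxx.
  move/eqP: (jump0 (fun i _ => jump_gap_ge0 eta i) i isT).
  rewrite !mulf_eq0 theta_neq0 (negbTE (c_diag_neq0 i)) /= orbb subr_eq0.
  by move/eqP.
rewrite subrr qform0 eqxx /=; apply/eqP/big1 => i _.
have [->|/eta_eq ->] := eqVneq (theta i) 0; first by rewrite !mul0r.
by rewrite subrr expr0n mulr0.
Qed.

End HamiltonianMax.

Theorem proposition2p5 (R : realType) (n : nat) (T alpha l : R)
  (Lambda Sigma : 'M[R]_n) (theta : 'I_n -> R) (C : R -> 'M[R]_n) :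
  (0 < n)%N -> 0 < T -> 0 <= alpha -> 0 < l ->
  posdef_mx Lambda -> nonnegdef_mx Sigma -> (forall i, 0 <= theta i) ->
  (* C is a positive definite solution of the Riccati IVP on [0,T] *)
  (forall t, 0 <= t <= T -> posdef_mx (C t)) ->
  C T = l%:M ->
  (forall t, 0 <= t <= T -> forall i j,
     deriv_in 0 T (fun s => C s i j) t
       (((C t)^T *m invmx Lambda *m C t
         + (C t)^T *m diag_mx (\row_k (theta k / C t k k)) *m C t
         - alpha *: Sigma) i j)) ->
  let w := fun (t : R) (x : 'cV[R]_n) => qform (C t) x in
  let f := fun (xi x : 'cV[R]_n) => qform Lambda xi + alpha * qform Sigma x in
  let H := fun (t : R) (x xi eta : 'cV[R]_n) =>
     \sum_(i < n) theta i * (w t x - w t (x - eta i 0 *: unitv R i))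
     + grad_apply (w t) x xi - f xi x in
  let xistar := fun (t : R) (x : 'cV[R]_n) => invmx Lambda *m C t *m x in
  let etastar := fun (t : R) (x : 'cV[R]_n) =>
     diag_mx (\row_k (C t k k)^-1) *m C t *m x in
  (forall x, w T x = l * (x^T *m x) 0 0) /\
  (forall t, 0 <= t <= T -> forall x : 'cV[R]_n,
     deriv_in 0 T (fun s => w s x) t
       (sup (range (fun u : 'cV[R]_n * 'cV[R]_n => H t x u.1 u.2))) /\
     sup (range (fun u : 'cV[R]_n * 'cV[R]_n => H t x u.1 u.2))
       = H t x (xistar t x) (etastar t x) /\
     (forall xi eta, H t x xi eta <= H t x (xistar t x) (etastar t x)) /\
     (forall xi eta, H t x xi eta = H t x (xistar t x) (etastar t x) <->
        (xi = xistar t x /\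
         forall i, theta i != 0 -> eta i 0 = etastar t x i 0))).
Proof.
move=> _ _ _ _ Lambda_posdef _ theta_ge0 C_posdef C_T C_deriv w f H xistar etastar.
split=> [x|t tT x]; first by rewrite /w C_T qform_scalar.
have Ct_posdef := C_posdef t tT; have [Ct_sym _] := Ct_posdef.
have [Lambda_sym _] := Lambda_posdef.
have HE xi eta : H t x xi eta
    = hamiltonian (C t) Lambda theta x xi eta - alpha * qform Sigma x.
  by rewrite /H /w /f grad_apply_qform // /hamiltonian; ring.
have H_le xi eta : H t x xi eta <= H t x (xistar t x) (etastar t x).
  by rewrite !HE lerD2r; apply: hamiltonian_le_opt.
have H_eq xi eta : H t x xi eta = H t x (xistar t x) (etastar t x) <->
    xi = xistar t x /\ forall i, theta i != 0 -> eta i 0 = etastar t x i 0.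
  apply: iff_trans (hamiltonian_eq_opt _ _ _ x Ct_posdef Lambda_posdef theta_ge0 xi eta).
  by rewrite !HE; split=> [/subIr|->].
rewrite (@sup_range_max _ _ (fun u => H t x u.1 u.2) (xistar t x, etastar t x));
  last by case=> xi eta; apply: H_le.
split; last by split.
rewrite HE hamiltonian_opt ?posdef_unitmx //; last first.
  by move=> i; rewrite gt_eqF ?posdef_diag_gt0.
have -> : forall A : 'M[R]_n, qform A x - alpha * qform Sigma x
    = qform (A - alpha *: Sigma) x by move=> A; rewrite !qformE bilAB bilAZ.
by apply: deriv_in_qform => i j; apply: C_deriv.
Qed.
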